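(* Let $G$ act properly on a countable set $S$. Then for every invariant $m:S\times S\to[0,\infty]$, $$\sum_{b,b'\in O}\sum_{s\in Gb'}m(b,s)\,\lambda(G_{s,s})=\sum_{b,b'\in O}\sum_{s\in Gb'}\lambda(G_{b',b'})\,m(s,b),$$ and if $G$ is unimodular, moreover $$\sum_{b\in O}\frac{1}{\lambda(G_{b,b})}\sum_{s\in S}m(b,s)=\sum_{b\in O}\frac{1}{\lambda(G_{b,b})}\sum_{s\in S}m(s,b).$$
   Context: $G$ is a locally compact second countable Hausdorff group with left Haar measure $\lambda$. $S$ is countable (with its power set), $G$ acts measurably on $S$, and the action is proper: with $\mu_s$ the image of $\lambda$ under $g\mapsto gs$, there is a partition $B_1,B_2,\dots$ of $S$ with $\mu_s(B_n)<\infty$ for all $s,n$. $G_{s,t}=\{g:gs=t\}$. $O$ is a system of representatives of the orbits $Gs$. $m$ is invariant if $m(gs,gt)=m(s,t)$ for all $g,s,t$. $G$ is unimodular if its left Haar measure is also right invariant. *)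

From HB Require Import structures.
From mathcomp Require Import all_boot all_order all_algebra.
From mathcomp Require Import all_classical all_reals all_analysis.
Set Implicit Arguments. Unset Strict Implicit. Unset Printing Implicit Defensive.
Import Order.TTheory GRing.Theory Num.Theory.
Local Open Scope classical_set_scope.
Local Open Scope ring_scope.
Local Open Scope ereal_scope.

Definition borel_of (G : ptopologicalType) :=
  g_sigma_algebraType (@open G).

Definition lcsc_group (G : ptopologicalType) (mul : G -> G -> G)
    (inv : G -> G) (one : G) : Prop :=
  [/\ (forall x y z, mul x (mul y z) = mul (mul x y) z),
      (forall x, mul one x = x /\ mul x one = x),
      (forall x, mul (inv x) x = one /\ mul x (inv x) = one),
      continuous (fun p : G * G => mul p.1 p.2) /\ continuous inv &
      [/\ locally_compact [set: G], @second_countable G & hausdorff_space G]].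

(* lam is a left Haar measure on the Borel sets of G: a nonzero-on-opens,
   finite-on-compacts, left-invariant Borel measure (for lcsc groups such a
   measure is automatically Radon). *)
Definition left_haar {R : realType} (G : ptopologicalType) (mul : G -> G -> G)
    (lam : {measure set (borel_of G) -> \bar R}) : Prop :=
  [/\ (forall (g : G) (A : set (borel_of G)), measurable A ->
         lam [set mul g a | a in A] = lam A),
      (forall K : set G, compact K -> lam K < +oo) &
      (forall U : set G, open U -> U !=set0 -> 0 < lam U)].

Definition unimodular {R : realType} (G : ptopologicalType) (mul : G -> G -> G)
    (lam : {measure set (borel_of G) -> \bar R}) : Prop :=
  forall (g : G) (A : set (borel_of G)), measurable A ->
    lam [set mul a g | a in A] = lam A.

Definition measurable_action (G : ptopologicalType) (mul : G -> G -> G)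
    (one : G) (S : Type) (act : G -> S -> S) : Prop :=
  [/\ (forall s, act one s = s),
      (forall g h s, act (mul g h) s = act g (act h s)) &
      (forall (s : S) (T : set S),
         measurable ((fun g : borel_of G => act g s) @^-1` T))].

Definition mu_s {R : realType} (G : ptopologicalType)
    (lam : {measure set (borel_of G) -> \bar R}) (S : Type)
    (act : G -> S -> S) (s : S) (B : set S) : \bar R :=
  lam ((fun g : borel_of G => act g s) @^-1` B).

Definition proper_action {R : realType} (G : ptopologicalType)
    (lam : {measure set (borel_of G) -> \bar R}) (S : Type)
    (act : G -> S -> S) : Prop :=
  exists B : nat -> set S,
    [/\ trivIset [set: nat] B, \bigcup_n B n = [set: S] &
        forall s n, mu_s lam act s (B n) < +oo].

Definition Gst (G S : Type) (act : G -> S -> S) (s t : S) : set G :=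
  [set g | act g s = t].

Definition orbitG (G S : Type) (act : G -> S -> S) (s : S) : set S :=
  [set act g s | g in [set: G]].

Definition orbit_reps (G S : Type) (act : G -> S -> S) (O : set S) : Prop :=
  forall s : S, exists! b, O b /\ orbitG act s b.

Definition invariant_fun (G S : Type) (act : G -> S -> S) {R : realType}
    (m : S -> S -> \bar R) : Prop :=
  forall g s t, m (act g s) (act g t) = m s t.

From HB Require Import structures.
From mathcomp Require Import all_boot all_order all_algebra.
From mathcomp Require Import all_classical all_reals all_analysis.
Set Implicit Arguments. Unset Strict Implicit. Unset Printing Implicit Defensive.
Import Order.TTheory GRing.Theory Num.Theory.
Local Open Scope classical_set_scope.
Local Open Scope ring_scope.
Local Open Scope ereal_scope.

(* Mass transport: for fixed b, b', the sets G_{s,b'} & G_{b,t} (s, t in S)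
   form a countable measurable partition of G, and for g in such a piece
   invariance gives m(b, s) = m(g s, g b) = m(t, b').  Summing
   m(b, s) lam(G_{s,b'} & G_{b,t}) first over t and then over s, or the other
   way round, yields sum_s m(b,s) lam(G_{s,b'}) = sum_t m(t,b') lam(G_{b,t}).
   Left translation identifies lam(G_{s,b'}) with lam(G_{s,s}) when s is in
   G b', and lam(G_{b,t}) with lam(G_{b,b}) when t is in G b; summing over
   representatives gives the first identity.  If G is unimodular, right
   translation makes lam(G_{s,s}) constant on orbits; stabilisers have
   positive measure (their translates cover G) and finite measure
   (properness), so one may divide by them, which gives the second identity. *)

Section esum_scale.
Variables (R : realType) (T : choiceType).
Implicit Types (I X : set T) (c : \bar R) (a : T -> \bar R).

Lemma ge0_fsumeZl X c a : finite_set X -> (forall i, X i -> 0 <= a i) ->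
  c * \sum_(i \in X) a i = \sum_(i \in X) (c * a i).
Proof.
move=> finX a0; rewrite !fsbig_finite//= big_seq [in RHS]big_seq.
by rewrite ge0_sume_distrr// => i; rewrite in_fset_set// inE => /a0.
Qed.

Lemma ge0_esumZl_le I c a : 0 <= c -> (forall i, I i -> 0 <= a i) ->
  \esum_(i in I) (c * a i) <= c * (\esum_(i in I) a i).
Proof.
move=> c0 a0; apply: ge_ereal_sup => _ [X [finX XI] <-].
rewrite -ge0_fsumeZl//; last by move=> i /XI /a0.
by apply: lee_wpmul2l => //; apply: ereal_sup_ubound; exists X.
Qed.

Lemma ge0_esumZl I c a : 0 <= c -> (forall i, I i -> 0 <= a i) ->
  c * (\esum_(i in I) a i) = \esum_(i in I) (c * a i).
Proof.
move=> c0 a0; apply/eqP; rewrite eq_le ge0_esumZl_le// andbT.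
have esum0 : 0 <= \esum_(i in I) a i by exact: esum_ge0.
case: c c0 => [r| |]// r0; last first.
  have [->|] := eqVneq (\esum_(i in I) a i) 0.
    by rewrite mule0 esum_ge0// => i /a0; exact: mule_ge0.
  rewrite neq_lt ltNge esum0 /= => esum_gt0; rewrite gt0_mulye//.
  have [_ [X [finX XI] <-] X0] := ereal_sup_gt esum_gt0.
  apply: esum_ge; exists X => //.
  by rewrite -ge0_fsumeZl ?gt0_mulye// => i /XI /a0.
have [->|rn0] := eqVneq r 0%R.
  by rewrite mul0e esum_ge0// => i _; rewrite mul0e.
have {rn0}r0 : (0 < r)%R by rewrite lt_neqAle eq_sym rn0 -lee_fin.
rewrite -lee_pdivlMl//.
rewrite [leLHS](_ : _ = \esum_(i in I) ((r^-1)%:E * (r%:E * a i))); last first.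
  by apply: eq_esum => i _; rewrite muleA -EFinM mulVf ?gt_eqF// mul1e.
apply: ge0_esumZl_le; first by rewrite lee_fin invr_ge0 ltW.
by move=> i /a0; apply: mule_ge0; rewrite lee_fin ltW.
Qed.

End esum_scale.

Lemma exchange_esum (R : realType) (T1 T2 : choiceType) (I : set T1)
    (J : set T2) (a : T1 -> T2 -> \bar R) :
  (forall i j, I i -> J j -> 0 <= a i j) ->
  \esum_(i in I) \esum_(j in J) a i j = \esum_(j in J) \esum_(i in I) a i j.
Proof.
move=> a0; rewrite !esum_esum//; last by move=> j i Jj Ii; apply: a0.
rewrite (reindex_esum (J `*`` fun=> I) _ (fun x => (x.2, x.1)))//; split=> //=.
- by move=> [i j] [/=].
- by move=> [i1 i2] [j1 j2] /= _ _ [] -> ->.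
- by move=> [i1 i2] [Ii1 Ji2] /=; exists (i2, i1).
Qed.

Lemma esum_setT_mkcond (R : realType) (T : choiceType) (A : set T)
    (f g : T -> \bar R) :
  {in A, f =1 g} -> (forall t, ~ A t -> g t = 0) ->
  \esum_(t in A) f t = \esum_(t in [set: T]) g t.
Proof.
move=> fg g0; rewrite esum_mkcond; apply: eq_esum => t _.
by case: ifPn => [/fg//|]; rewrite notin_setE => /g0.
Qed.

Lemma mule_cross_inv (R : realType) (c c' x y : \bar R) :
  c != 0 -> c \is a fin_num -> c' != 0 -> c' \is a fin_num ->
  c' * x = c * y -> c^-1 * x = c'^-1 * y.
Proof.
move=> c0 cfin c'0 c'fin E.
rewrite -[x]mul1e -(mulVe c'0 c'fin) -muleA E.
by rewrite muleCA [c^-1 * _]muleA (mulVe c0 cfin) mul1e.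
Qed.

Section countable_partition.
Variables (d : measure_display) (T : measurableType d) (R : realType)
  (mu : {measure set T -> \bar R}) (I : countType).

Lemma measure_bigcupT_esum (A : I -> set T) :
  (forall i, measurable (A i)) -> trivIset [set: I] A ->
  mu (\bigcup_(i in [set: I]) A i) = \esum_(i in [set: I]) mu (A i).
Proof.
move=> mA tA.
(* Transport A along pickle to a sequence; the indices outside the range of
   pickle carry the empty set. *)
pose B n := if @pickle_inv I n is Some i then A i else set0.
have mB n : measurable (B n) by rewrite /B; case: pickle_inv.
have AB : \bigcup_(i in [set: I]) A i = \bigcup_n B n.
  apply/seteqP; split=> x.
    by move=> [i _ Ax]; exists (pickle i) => //; rewrite /B pickleK_inv.
  by move=> [n _]; rewrite /B; case: pickle_inv => // i Ax; exists i.
have tB : trivIset [set: nat] B.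
  move=> n1 n2 _ _; rewrite /B.
  case E1: (pickle_inv n1) => [i1|]; last by rewrite set0I => -[].
  case E2: (pickle_inv n2) => [i2|]; last by rewrite setI0 => -[].
  move=> /(tA i1 i2 Logic.I Logic.I) i12.
  have := @pickle_invK I n1; have := @pickle_invK I n2.
  by rewrite E1 E2 i12 => /= -> ->.
rewrite AB measure_semi_bigcup//; last exact: bigcupT_measurable.
rewrite nneseries_esumT// (esumID (range (@pickle I)))//.
rewrite [X in _ + X]esum1 ?adde0; last first.
  move=> n [_ nr]; rewrite /B.
  case E: pickle_inv => [i|]; last exact: measure0.
  by exfalso; apply: nr; exists i => //; have := @pickle_invK I n; rewrite E.
rewrite setTI esum_image; last first.
  by move=> x y _ _; exact: (pcan_inj (@pickleK_inv I)).
by apply: eq_esum => i _; rewrite /B pickleK_inv.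
Qed.

Lemma measure_setI_partition (A : set T) (F : I -> set T) :
  measurable A -> (forall i, measurable (F i)) ->
  trivIset [set: I] F -> \bigcup_(i in [set: I]) F i = [set: T] ->
  mu A = \esum_(i in [set: I]) mu (A `&` F i).
Proof.
move=> mA mF tF coverF.
rewrite -measure_bigcupT_esum; last 2 first.
- by move=> i; exact: measurableI.
- by move=> i j _ _ [x [[_ Fi] [_ Fj]]]; apply: tF => //; exists x.
by rewrite -setI_bigcupr coverF setIT.
Qed.

End countable_partition.

Definition group_laws (G : Type) (mul : G -> G -> G) (inv : G -> G) (one : G) :=
  [/\ associative mul, left_id one mul, right_id one mul,
      left_inverse one inv mul & right_inverse one inv mul].

Definition group_action (G S : Type) (mul : G -> G -> G) (one : G)
    (act : G -> S -> S) :=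
  (forall s, act one s = s) /\ (forall g h s, act (mul g h) s = act g (act h s)).

Lemma lcsc_group_laws (G : ptopologicalType) (mul : G -> G -> G) (inv : G -> G)
    (one : G) :
  lcsc_group mul inv one -> group_laws mul inv one.
Proof.
move=> [mulA mul1 mulV _ _]; split=> // x; by [case: (mul1 x)|case: (mulV x)].
Qed.

Lemma measurable_action_group (G : ptopologicalType) (mul : G -> G -> G)
    (one : G) (S : Type) (act : G -> S -> S) :
  measurable_action mul one act -> group_action mul one act.
Proof. by case. Qed.

Section group_action.
Variables (G S : Type) (mul : G -> G -> G) (inv : G -> G) (one : G)
  (act : G -> S -> S).
Hypotheses (grp : group_laws mul inv one) (actP : group_action mul one act).

Let mulA : associative mul. Proof. by case: grp. Qed.
Let mul1g : left_id one mul. Proof. by case: grp. Qed.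
Let mulg1 : right_id one mul. Proof. by case: grp. Qed.
Let mulVg : left_inverse one inv mul. Proof. by case: grp. Qed.
Let mulgV : right_inverse one inv mul. Proof. by case: grp. Qed.
Let act1 : forall s, act one s = s. Proof. by case: actP. Qed.
Let actM : forall g h s, act (mul g h) s = act g (act h s).
Proof. by case: actP. Qed.

Lemma actK g : cancel (act g) (act (inv g)).
Proof. by move=> s; rewrite -actM mulVg act1. Qed.

Lemma actKV g : cancel (act (inv g)) (act g).
Proof. by move=> s; rewrite -actM mulgV act1. Qed.

Lemma trivIset_Gst_src t : trivIset [set: S] (Gst act ^~ t).
Proof.
by move=> s1 s2 _ _ [g [/= e1 e2]]; rewrite -(actK g s1) -(actK g s2) e1 e2.
Qed.

Lemma trivIset_Gst_tgt s : trivIset [set: S] (Gst act s).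
Proof. by move=> t1 t2 _ _ [g [/= <- <-]]. Qed.

Lemma bigcup_Gst_src t : \bigcup_(s in [set: S]) Gst act s t = [set: G].
Proof.
apply/seteqP; split=> // g _.
by exists (act (inv g) t) => //; rewrite /Gst/= actKV.
Qed.

Lemma bigcup_Gst_tgt s : \bigcup_(t in [set: S]) Gst act s t = [set: G].
Proof. by apply/seteqP; split=> // g _; exists (act g s). Qed.

Lemma Gst_src_notin_orbit s t : ~ orbitG act t s -> Gst act s t = set0.
Proof.
move=> st; apply/seteqP; split=> // g /= gst; apply: st.
by exists (inv g); rewrite // -gst actK.
Qed.

Lemma Gst_tgt_notin_orbit s t : ~ orbitG act s t -> Gst act s t = set0.
Proof. by move=> st; apply/seteqP; split=> // g /= gst; apply: st; exists g. Qed.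

Lemma Gst_src_translate h s t : act h t = s ->
  Gst act s t = [set mul (inv h) a | a in Gst act s s].
Proof.
move=> hts; apply/seteqP; split=> g /=.
  move=> gst; exists (mul h g); first by rewrite /Gst/= actM gst.
  by rewrite mulA mulVg mul1g.
by move=> [a ass <-]; rewrite /Gst/= actM ass -hts actK.
Qed.

Lemma Gst_tgt_translate h s t : act h s = t ->
  Gst act s t = [set mul h a | a in Gst act s s].
Proof.
move=> hst; apply/seteqP; split=> g /=.
  move=> gst; exists (mul (inv h) g); first by rewrite /Gst/= actM gst -hst actK.
  by rewrite mulA mulgV mul1g.
by move=> [a ass <-]; rewrite /Gst/= actM ass.
Qed.

Lemma Gst_diag_translate h s t : act h s = t ->
  Gst act t t = [set mul a (inv h) | a in Gst act s t].
Proof.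
move=> hst; apply/seteqP; split=> g /=.
  move=> gtt; exists (mul g h); first by rewrite /Gst/= actM hst.
  by rewrite -mulA mulgV mulg1.
by move=> [a ast <-]; rewrite /Gst/= actM -{1}hst actK.
Qed.

End group_action.

Lemma esum_orbit_partition (R : realType) (G : Type) (S : choiceType)
    (mul : G -> G -> G) (inv : G -> G) (one : G) (act : G -> S -> S)
    (O : set S) (f : S -> \bar R) :
  group_laws mul inv one -> group_action mul one act -> orbit_reps act O ->
  (forall s, 0 <= f s) ->
  \esum_(s in [set: S]) f s = \esum_(b in O) \esum_(s in orbitG act b) f s.
Proof.
move=> grp actP reps f0; rewrite esum_esum//.
have rep_orbit b s : orbitG act b s -> orbitG act s b.
  by move=> [g _ <-]; exists (inv g); rewrite ?(actK grp actP).
rewrite (reindex_esum (O `*`` orbitG act) [set: S] snd)//; split=> //=.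
- move=> [b1 s] [b2 s']; rewrite !inE /= => -[Ob1 b1s] [Ob2 b2s] s's; subst s'.
  have [b [_ uniq_b]] := reps s.
  by rewrite -(uniq_b b1 (conj Ob1 (rep_orbit _ _ b1s)))
    -(uniq_b b2 (conj Ob2 (rep_orbit _ _ b2s))).
- move=> s _; have [b [[Ob sb] _]] := reps s.
  by exists (b, s) => //; split=> //; exact: rep_orbit.
Qed.

Section mass_transport.
Variables (R : realType) (G : ptopologicalType) (mul : G -> G -> G)
  (inv : G -> G) (one : G) (lam : {measure set (borel_of G) -> \bar R})
  (S : countType) (act : G -> S -> S).
Hypotheses (grp : group_laws mul inv one) (actP : measurable_action mul one act)
  (lam_linv : forall (g : G) (A : set (borel_of G)), measurable A ->
     lam [set mul g a | a in A] = lam A).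

Let actG : group_action mul one act := measurable_action_group actP.

Lemma measurable_Gst s t : measurable (Gst act s t : set (borel_of G)).
Proof. by case: actP => _ _ /(_ s [set t]). Qed.

Lemma lam_Gst_src s t : orbitG act t s -> lam (Gst act s t) = lam (Gst act s s).
Proof.
move=> [h _ hts]; rewrite (Gst_src_translate grp actG hts).
exact: lam_linv (measurable_Gst s s).
Qed.

Lemma lam_Gst_tgt s t : orbitG act s t -> lam (Gst act s t) = lam (Gst act s s).
Proof.
move=> [h _ hst]; rewrite (Gst_tgt_translate grp actG hst).
exact: lam_linv (measurable_Gst s s).
Qed.

Lemma lam_Gst_diag_orbit : unimodular mul lam ->
  forall s t, orbitG act s t -> lam (Gst act t t) = lam (Gst act s s).
Proof.
move=> lam_rinv s t st; rewrite -(lam_Gst_tgt st); case: st => h _ hst.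
by rewrite (Gst_diag_translate grp actG hst) lam_rinv //; exact: measurable_Gst.
Qed.

Lemma lam_Gst_diag_gt0 s : 0 < lam [set: G] -> 0 < lam (Gst act s s).
Proof.
move=> lamG_gt0; rewrite lt0e measure_ge0 andbT; apply/eqP => lam_ss0.
move: lamG_gt0; rewrite (measure_setI_partition lam measurableT
  (measurable_Gst s) (@trivIset_Gst_tgt _ _ act s) (bigcup_Gst_tgt act s)).
rewrite esum1 ?ltxx// => t _; rewrite setTI.
have [st|nst] := pselect (orbitG act s t); first by rewrite lam_Gst_tgt.
by rewrite Gst_tgt_notin_orbit// measure0.
Qed.

Lemma lam_Gst_diag_lt_oo s : proper_action lam act -> lam (Gst act s s) < +oo.
Proof.
move=> [B [_ coverB lamB]]; have [n _ Bns] : (\bigcup_n B n) s by rewrite coverB.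
apply: le_lt_trans (lamB s n); apply: le_measure; rewrite ?inE.
- exact: measurable_Gst.
- by case: actP => _ _; apply.
- by move=> g /= ->.
Qed.

Variable m : S -> S -> \bar R.
Hypotheses (m_ge0 : forall s t, 0 <= m s t) (m_inv : invariant_fun act m).

Lemma mass_transport b b' :
  \esum_(s in [set: S]) (m b s * lam (Gst act s b'))
  = \esum_(t in [set: S]) (m t b' * lam (Gst act b t)).
Proof.
have transport s t : m b s * lam (Gst act s b' `&` Gst act b t)
                   = m t b' * lam (Gst act s b' `&` Gst act b t).
  have [[g [/= gsb' gbt]]|/set0P/negP/negPn/eqP->] :=
    pselect (Gst act s b' `&` Gst act b t !=set0).
    by rewrite -gsb' -gbt m_inv.
  by rewrite measure0 !mule0.
transitivity (\esum_(s in [set: S]) \esum_(t in [set: S])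
                (m b s * lam (Gst act s b' `&` Gst act b t))).
  apply: eq_esum => s _; rewrite (measure_setI_partition lam (measurable_Gst s b')
    (measurable_Gst b) (@trivIset_Gst_tgt _ _ act b) (bigcup_Gst_tgt act b)).
  by rewrite ge0_esumZl.
rewrite exchange_esum; last by move=> s t _ _; rewrite mule_ge0.
apply: eq_esum => t _; rewrite (measure_setI_partition lam (measurable_Gst b t)
  (measurable_Gst ^~ b') (@trivIset_Gst_src _ _ _ _ _ _ grp actG b')
  (bigcup_Gst_src grp actG b')).
by rewrite ge0_esumZl//; apply: eq_esum => s _; rewrite transport setIC.
Qed.

Lemma mass_transport_orbits b b' :
  \esum_(s in orbitG act b') (m b s * lam (Gst act s s))
  = \esum_(t in orbitG act b) (m t b' * lam (Gst act b b)).
Proof.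
rewrite (@esum_setT_mkcond _ _ (orbitG act b') _
  (fun s => m b s * lam (Gst act s b'))); last 2 first.
- by move=> s /set_mem /lam_Gst_src->.
- by move=> s /(Gst_src_notin_orbit grp actG)->; rewrite measure0 mule0.
rewrite (@esum_setT_mkcond _ _ (orbitG act b) _
  (fun t => m t b' * lam (Gst act b t))); last 2 first.
- by move=> t /set_mem bt; rewrite (lam_Gst_tgt bt).
- by move=> t bt; rewrite Gst_tgt_notin_orbit// measure0 mule0.
exact: mass_transport.
Qed.

Lemma mass_transport_reps (O : set S) :
  \esum_(b in O) \esum_(b' in O) \esum_(s in orbitG act b')
      (m b s * lam (Gst act s s))
  = \esum_(b in O) \esum_(b' in O) \esum_(s in orbitG act b')
      (lam (Gst act b' b') * m s b).
Proof.
under eq_esum do under eq_esum do rewrite mass_transport_orbits.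
rewrite exchange_esum; last by move=> *; apply: esum_ge0 => *; rewrite mule_ge0.
by under eq_esum do under eq_esum do under eq_esum do rewrite muleC.
Qed.

Section unimodular.
Hypotheses (lam_rinv : unimodular mul lam) (lamG_gt0 : 0 < lam [set: G])
  (proper : proper_action lam act).

Let lam_Gst_diag_neq0 s : lam (Gst act s s) != 0.
Proof. by rewrite gt_eqF// lam_Gst_diag_gt0. Qed.

Let lam_Gst_diag_fin_num s : lam (Gst act s s) \is a fin_num.
Proof. by rewrite ge0_fin_numE ?lam_Gst_diag_lt_oo. Qed.

Let lam_Gst_diag_inv_ge0 s : 0 <= (lam (Gst act s s))^-1.
Proof. by rewrite inve_ge0. Qed.

Lemma unimodular_mass_transport_orbits b b' :
  \esum_(s in orbitG act b') ((lam (Gst act b b))^-1 * m b s)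
  = \esum_(t in orbitG act b) ((lam (Gst act b' b'))^-1 * m t b').
Proof.
rewrite -!ge0_esumZl//; apply: mule_cross_inv => //.
rewrite !ge0_esumZl//; have := mass_transport_orbits b b'.
under eq_esum => s b's do rewrite (lam_Gst_diag_orbit lam_rinv b's) muleC.
by under [in RHS]eq_esum do rewrite muleC.
Qed.

Lemma unimodular_mass_transport_reps (O : set S) : orbit_reps act O ->
  \esum_(b in O) ((lam (Gst act b b))^-1 * \esum_(s in [set: S]) m b s)
  = \esum_(b in O) ((lam (Gst act b b))^-1 * \esum_(s in [set: S]) m s b).
Proof.
move=> reps.
have expand (c : \bar R) (f : S -> \bar R) : 0 <= c -> (forall s, 0 <= f s) ->
    c * (\esum_(s in [set: S]) f s)
    = \esum_(b' in O) \esum_(s in orbitG act b') (c * f s).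
  move=> c0 f0; rewrite (esum_orbit_partition grp actG reps f0) ge0_esumZl//.
    by apply: eq_esum => b' _; rewrite ge0_esumZl.
  by move=> *; exact: esum_ge0.
transitivity (\esum_(b in O) \esum_(b' in O) \esum_(t in orbitG act b)
                ((lam (Gst act b' b'))^-1 * m t b')).
  apply: eq_esum => b _; rewrite (expand _ _ _ (m_ge0 b))//.
  by apply: eq_esum => b' _; exact: unimodular_mass_transport_orbits.
rewrite exchange_esum; last by move=> *; apply: esum_ge0 => *; rewrite mule_ge0.
by apply: eq_esum => b _; rewrite (expand _ _ _ (m_ge0 ^~ b)).
Qed.

End unimodular.

End mass_transport.

Theorem corollary6p6 (R : realType) (G : ptopologicalType)
  (mul : G -> G -> G) (inv : G -> G) (one : G)
  (lam : {measure set (borel_of G) -> \bar R})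
  (S : countType) (act : G -> S -> S) (O : set S)
  (m : S -> S -> \bar R) :
  lcsc_group mul inv one ->
  left_haar mul lam ->
  measurable_action mul one act ->
  proper_action lam act ->
  orbit_reps act O ->
  (forall s t, 0 <= m s t) ->
  invariant_fun act m ->
  (\esum_(b in O) \esum_(b' in O) \esum_(s in orbitG act b')
      (m b s * lam (Gst act s s))
   = \esum_(b in O) \esum_(b' in O) \esum_(s in orbitG act b')
      (lam (Gst act b' b') * m s b))
  /\
  (unimodular mul lam ->
   \esum_(b in O) ((lam (Gst act b b))^-1 * \esum_(s in [set: S]) m b s)
   = \esum_(b in O) ((lam (Gst act b b))^-1 * \esum_(s in [set: S]) m s b)).
Proof.
move=> /lcsc_group_laws grp [lam_linv _ lam_open_gt0] actP proper reps.
move=> m_ge0 m_inv.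
split; first exact (mass_transport_reps grp actP lam_linv m_ge0 m_inv O).
move=> lam_rinv; have lamG_gt0 : 0 < lam [set: G].
  by apply: lam_open_gt0; [exact: openT | exists point].
exact (unimodular_mass_transport_reps grp actP lam_linv m_ge0 m_inv
  lam_rinv lamG_gt0 proper reps).
Qed.
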